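(* Let $\mathbbm{k}$ be a field, $n\ge 1$, $m\geq 0$, and $A_1,\dots,A_m\in\mathrm{Mat}_n(\mathbbm{k})$. Then $$\det P_m(A_1,\dots,A_m)=(-1)^{mn}\det Q_m(A_1,\dots,A_m).$$
   Context: For noncommuting variables $a_1,a_2,\dots$ define polynomials by $P_0=1$, $P_1(a_1)=a_1$, $P_m(a_1,\dots,a_m)=P_{m-1}(a_1,\dots,a_{m-1})a_m+P_{m-2}(a_1,\dots,a_{m-2})$, and $Q_0=1$, $Q_1(a_1)=-a_1$, $Q_m(a_1,\dots,a_m)=-Q_{m-1}(a_2,\dots,a_m)a_1+Q_{m-2}(a_3,\dots,a_m)$. (E.g. $P_2=1+a_1a_2$, $Q_2=1+a_2a_1$.) These are evaluated on matrices. *)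

From HB Require Import structures.
From mathcomp Require Import all_boot all_order all_algebra.
Set Implicit Arguments. Unset Strict Implicit. Unset Printing Implicit Defensive.
Import GRing.Theory.
Local Open Scope ring_scope.

(* Prev [:: a_m; a_{m-1}; ...; a_1] = P_m(a_1,...,a_m):
   P_0 = 1, P_1(a_1) = a_1, P_m = P_{m-1}(a_1..a_{m-1}) a_m + P_{m-2}(a_1..a_{m-2}). *)
Fixpoint Prev (R : ringType) (s : seq R) : R :=
  match s with
  | [::] => 1
  | [:: x] => x
  | x :: ((y :: t) as s') => Prev s' * x + Prev t
  end.

Definition Pcont (R : ringType) (s : seq R) : R := Prev (rev s).

(* Qcont [:: a_1; ...; a_m] = Q_m(a_1,...,a_m):
   Q_0 = 1, Q_1(a_1) = -a_1, Q_m = -Q_{m-1}(a_2..a_m) a_1 + Q_{m-2}(a_3..a_m). *)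
Fixpoint Qcont (R : ringType) (s : seq R) : R :=
  match s with
  | [::] => 1
  | [:: x] => - x
  | x :: ((y :: t) as s') => - (Qcont s' * x) + Qcont t
  end.

From HB Require Import structures.
From mathcomp Require Import all_boot all_order all_algebra.
Import GRing.Theory.

Set Implicit Arguments.
Unset Strict Implicit.
Unset Printing Implicit Defensive.
Local Open Scope ring_scope.

(* With the 2x2 block transfer matrices T(a) = [[a, 1], [1, 0]], the product
   T(A_1) ... T(A_m) has top row (P_m, P_{m-1}), while its inverse
   T(A_m)^-1 ... T(A_1)^-1, where T(a)^-1 = [[0, 1], [1, -a]], has bottom-right
   block Q_m.  Jacobi's complementary minor identity for a matrix and its
   inverse then gives det P_m = det T(A_1) ... det T(A_m) * det Q_m, and each
   T(a) has determinant (-1)^n. *)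

Lemma det_ulsubmx_mulmx1 (R : comPzRingType) (m k : nat) (X Y : 'M[R]_(m + k)) :
  X *m Y = 1%:M -> \det (ulsubmx X) = \det X * \det (drsubmx Y).
Proof.
move=> XY1; pose Z := block_mx 1%:M (ursubmx Y) 0 (drsubmx Y).
have XZ : X *m Z = block_mx (ulsubmx X) 0 (dlsubmx X) 1%:M.
  move: XY1; rewrite -[X]submxK -[Y]submxK mulmx_block scalar_mx_block.
  case/eq_block_mx => _ XY12 _ XY22.
  rewrite /Z -[X]submxK mulmx_block !block_mxKul !block_mxKdl !block_mxKur.
  by rewrite !block_mxKdr !mulmx1 !mulmx0 !addr0 XY12 XY22.
have := congr1 determinant XZ.
by rewrite det_mulmx det_ublock det_lblock !det1 mulr1 mul1r.
Qed.

Section TransferMatrices.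
Variables (R : comNzRingType) (n : nat).
Local Notation M := 'M[R]_n.+1.
Local Notation MM := 'M[R]_(n.+1 + n.+1).

Definition transfer_mx (a : M) : MM := block_mx a 1%:M 1%:M 0.
Definition transfer_inv_mx (a : M) : MM := block_mx 0 1%:M 1%:M (- a).

Definition transfer_prod (s : seq M) : MM :=
  foldr (fun a X => transfer_mx a *m X) 1%:M s.
Definition transfer_inv_prod (s : seq M) : MM :=
  foldr (fun a Y => Y *m transfer_inv_mx a) 1%:M s.

Lemma transfer_mxK (a : M) : transfer_mx a *m transfer_inv_mx a = 1%:M.
Proof.
rewrite /transfer_mx /transfer_inv_mx mulmx_block scalar_mx_block.
by rewrite !mulmx0 !mul0mx !mulmx1 !mul1mx !addr0 !add0r subrr.
Qed.

Lemma transfer_prodK (s : seq M) :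
  transfer_prod s *m transfer_inv_prod s = 1%:M.
Proof.
elim: s => [|a s IHs] /=; first by rewrite mulmx1.
by rewrite -mulmxA (mulmxA (transfer_prod s)) IHs mul1mx transfer_mxK.
Qed.

Lemma transfer_prod_rcons (s : seq M) (a : M) :
  transfer_prod (rcons s a) = transfer_prod s *m transfer_mx a.
Proof.
elim: s => [|b s IHs] /=; first by rewrite mulmx1 mul1mx.
by rewrite IHs mulmxA.
Qed.

Lemma transfer_prod_top (s : seq M) :
  ulsubmx (transfer_prod s) = Pcont s /\
  ursubmx (transfer_prod s) = if rev s is _ :: t then Prev t else 0.
Proof.
rewrite /Pcont; elim/last_ind: s => [|s a [IHl IHr]].
  by rewrite /= scalar_mx_block block_mxKul block_mxKur.
rewrite transfer_prod_rcons rev_rcons -[transfer_prod s]submxK IHl IHr.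
rewrite /transfer_mx mulmx_block block_mxKul block_mxKur mulmx0 addr0 mulmx1.
by case: (rev s) => [|y t] /=; rewrite ?mul1mx ?addr0 ?mulmx1.
Qed.

Lemma transfer_inv_prod_bottom (s : seq M) :
  drsubmx (transfer_inv_prod s) = Qcont s /\
  dlsubmx (transfer_inv_prod s) = if s is _ :: t then Qcont t else 0.
Proof.
elim: s => [|a s [IHr IHl]].
  by rewrite /= scalar_mx_block block_mxKdr block_mxKdl.
rewrite /= -[transfer_inv_prod s]submxK IHr IHl /transfer_inv_mx mulmx_block.
rewrite block_mxKdr block_mxKdl mulmx0 add0r mulmx1 mulmxN.
by case: s {IHr IHl} => [|y t] /=; rewrite ?mul1mx ?add0r ?mulmx1 1?addrC.
Qed.

(* T(a) = [[1, a + 1], [0, 1]] * [[-1, 0], [1, 1]] * [[1, -1], [0, 1]]. *)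
Lemma det_transfer_mx (a : M) : \det (transfer_mx a) = (-1) ^+ n.+1.
Proof.
have -> : transfer_mx a = block_mx 1%:M (a + 1%:M) 0 1%:M
    *m block_mx (-1)%:M 0 1%:M 1%:M *m block_mx 1%:M (-1)%:M 0 1%:M.
  rewrite /transfer_mx !mulmx_block.
  rewrite !mulmx0 !mul0mx !mulmx1 !mul1mx !addr0 !add0r.
  rewrite raddfN /= !mulmxN !mulmx1 addNr.
  by rewrite addrCA addNr addr0 addKr.
by rewrite !det_mulmx !det_ublock det_lblock !det1 det_scalar !mulr1 mul1r.
Qed.

Lemma det_transfer_prod (s : seq M) :
  \det (transfer_prod s) = (-1) ^+ (size s * n.+1).
Proof.
elim: s => [|a s IHs] /=; first by rewrite det1.
by rewrite det_mulmx IHs det_transfer_mx mulSn exprD.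
Qed.

End TransferMatrices.

Theorem mainTheorem2 (F : fieldType) (n : nat) (s : seq 'M[F]_n.+1) :
  \det (Pcont s) = (-1) ^+ (size s * n.+1) * \det (Qcont s).
Proof.
have [Ptop _] := transfer_prod_top s.
have [Qbot _] := transfer_inv_prod_bottom s.
by rewrite -Ptop -Qbot -det_transfer_prod (det_ulsubmx_mulmx1 (transfer_prodK s)).
Qed.
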